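(* Let $R$ be a ring and $M$ a subprojective extension-reflecting right $R$-module. Then: (1) $M\in \underline{\mathfrak{Pr}}^{-1}(S)$ for every simple right $R$-module $S$ if and only if $M\in \underline{\mathfrak{Pr}}^{-1}(A)$ for every right $R$-module $A$ of finite composition length; (2) $M\in \underline{\mathfrak{Pr}}^{-1}(N)$ for every cyclic right $R$-module $N$ if and only if $M\in \underline{\mathfrak{Pr}}^{-1}(N)$ for every finitely generated right $R$-module $N$.
   Context: Modules are unital right $R$-modules. For modules $X,Y$, $X\in \underline{\mathfrak{Pr}}^{-1}(Y)$ means: for every epimorphism $g\colon B\to X$ and every homomorphism $f\colon Y\to X$ there exists $h\colon Y\to B$ with $gh=f$. A module $M$ is subprojective extension-reflecting if for every short exact sequence $0\to A\to B\to C\to 0$ of right $R$-modules, $M\in \underline{\mathfrak{Pr}}^{-1}(A)\cap \underline{\mathfrak{Pr}}^{-1}(C)$ implies $M\in \underline{\mathfrak{Pr}}^{-1}(B)$. *)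

(* Right R-modules are modelled as left modules over the
   converse ring R^c : for m : M and r : R, the right action m.r is r *: m. *)
From HB Require Import structures.
From mathcomp Require Import all_boot all_algebra.
Set Implicit Arguments. Unset Strict Implicit. Unset Printing Implicit Defensive.
Import GRing.Theory.
Local Open Scope ring_scope.

Section Defs.
Variable R : pzRingType.

Notation rmod := (lmodType R^c).

Definition PrInv (X Y : rmod) : Prop :=
  forall (B : rmod) (g : {linear B -> X}) (f : {linear Y -> X}),
    (forall x : X, exists b : B, g b = x) -> exists h : {linear Y -> B}, forall y, g (h y) = f y.

Definition short_exact (A B C : rmod) (i : {linear A -> B}) (p : {linear B -> C}) : Prop :=
  injective i /\ (forall c : C, exists b : B, p b = c) /\ (forall b, p b = 0 <-> exists a, i a = b).

Definition subprojective_extension_reflecting (M : rmod) : Prop :=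
  forall (A B C : rmod) (i : {linear A -> B}) (p : {linear B -> C}),
    short_exact i p -> PrInv M A -> PrInv M C -> PrInv M B.

Definition submodule (A : rmod) (P : A -> Prop) : Prop :=
  P 0 /\ (forall x y, P x -> P y -> P (x + y)) /\ (forall (r : R^c) x, P x -> P (r *: x)).

Definition simple_module (S : rmod) : Prop :=
  (exists x : S, x <> 0) /\
  forall P : S -> Prop, submodule P -> (forall x, P x -> x = 0) \/ (forall x, P x).

(* finite composition length: a finite chain of submodules
   0 = P_0 < P_1 < ... < P_n = A with each P_(k+1)/P_k simple, i.e. P_k is
   properly contained in P_(k+1) with no submodule strictly in between. *)
Definition finite_length (A : rmod) : Prop :=
  exists (n : nat) (P : nat -> A -> Prop),
    (forall k, submodule (P k)) /\
    (forall x, P 0%N x <-> x = 0) /\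
    (forall x, P n x) /\
    (forall k, (k < n)%N ->
       (forall x, P k x -> P k.+1 x) /\ (exists x, P k.+1 x /\ ~ P k x) /\
       (forall Q : A -> Prop, submodule Q ->
          (forall x, P k x -> Q x) -> (forall x, Q x -> P k.+1 x) ->
          (forall x, Q x <-> P k x) \/ (forall x, Q x <-> P k.+1 x))).

Definition cyclic_module (N : rmod) : Prop :=
  exists x : N, forall y : N, exists r : R^c, y = r *: x.

Definition finitely_generated (N : rmod) : Prop :=
  exists s : seq N, forall y : N, exists c : 'I_(size s) -> R^c,
    y = \sum_(i < size s) c i *: s`_i.

End Defs.

(* Let C be the class of modules X with M in Pr^{-1}(X). By hypothesis C is
   closed under extensions, and it contains every zero module. Every submodule
   P of A gives a short exact sequence 0 -> P -> A -> A/P -> 0, so A lies in C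
   as soon as P and A/P do. A module of composition length n+1 is an extension
   of a simple module by a submodule of length n, and a module generated by
   x_0, ..., x_n is an extension of a module generated by n elements (the images
   of x_1, ..., x_n) by the cyclic submodule x_0 R; induction on n gives both
   nontrivial implications. The converse ones hold because simple modules have
   finite length and cyclic modules are finitely generated. *)

From HB Require Import structures.
From mathcomp Require Import all_boot all_algebra boolp.
Set Implicit Arguments. Unset Strict Implicit. Unset Printing Implicit Defensive.
Import GRing.Theory.
Local Open Scope ring_scope.
Local Open Scope quotient_scope.

Section Submodules.
Variable R : pzRingType.
Implicit Types A B : lmodType R^c.

Lemma submodule_comap A B (p : {linear A -> B}) (T : B -> Prop) :
  submodule T -> submodule (fun a => T (p a)).
Proof.
move=> [T0 [TD TZ]]; split; first by rewrite linear0.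
split=> [x y Tx Ty | r x Tx]; first by rewrite linearD; apply: TD.
by rewrite linearZZ; apply: TZ.
Qed.

Lemma submodule_image A B (i : {linear A -> B}) (T : A -> Prop) :
  submodule T -> submodule (fun b => exists a, i a = b /\ T a).
Proof.
move=> [T0 [TD TZ]]; split; first by exists 0; rewrite linear0.
split=> [_ _ [x [<- Tx]] [y [<- Ty]] | r _ [x [<- Tx]]].
  by exists (x + y); rewrite linearD; split; last exact: TD.
by exists (r *: x); rewrite linearZZ; split; last exact: TZ.
Qed.

Lemma submodule_cyclic A (x : A) : submodule (fun a => exists r, a = r *: x).
Proof.
split; first by exists 0; rewrite scale0r.
split=> [_ _ [r ->] [t ->] | r _ [t ->]]; first by exists (r + t); rewrite scalerDl.
by exists (r * t); rewrite scalerA.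
Qed.

End Submodules.

Section QuotientModule.
Variables (R : pzRingType) (A : lmodType R^c) (P : A -> Prop).
Hypothesis P_submodule : submodule P.

Definition submodule_pred : {pred A} := fun x => `[< P x >].

Lemma submodule_pred_closed : subsemimod_closed submodule_pred.
Proof.
case: P_submodule => P0 [PD PZ].
split; first by split=> [|x y /asboolP Px /asboolP Py]; apply/asboolP; [|apply: PD].
by move=> r x /asboolP Px; apply/asboolP/PZ.
Qed.

HB.instance Definition _ :=
  GRing.isSubmodClosed.Build R^c A submodule_pred submodule_pred_closed.

Definition submodule_type := {x : A | submodule_pred x}.
HB.instance Definition _ := SubChoice.copy submodule_type {x : A | submodule_pred x}.
HB.instance Definition _ := [SubChoice_isSubLmodule of submodule_type by <:].

(* Despite its name, {ideal_quot S} is ring_quotient's Z-module quotient by any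
   zmodClosed S; only the scalar action remains to be defined. *)
Local Notation Q := {ideal_quot submodule_pred}.

Definition scaleq (a : R^c) := lift_op1 Q ( *:%R a).

Lemma pi_scale a : {morph \pi_Q : x / a *: x >-> scaleq a x}.
Proof.
move=> x; unlock scaleq; apply/eqP; rewrite piE Quotient.equivE.
by rewrite -scalerBr rpredZ // Quotient.idealrBE reprK.
Qed.
Canonical pi_scale_morph a := PiMorph1 (pi_scale a).

Lemma scaleqA a b (x : Q) : scaleq a (scaleq b x) = scaleq (a * b) x.
Proof. by rewrite -[x]reprK !piE scalerA. Qed.

Lemma scaleq1 : left_id 1 scaleq.
Proof. by move=> x; rewrite -[x]reprK !piE scale1r. Qed.

Lemma scaleqDr : right_distributive scaleq +%R.
Proof. by move=> a x y; rewrite -[x]reprK -[y]reprK !piE scalerDr. Qed.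

Lemma scaleqDl (x : Q) : {morph scaleq^~ x : a b / a + b}.
Proof. by move=> a b; rewrite -[x]reprK !piE scalerDl. Qed.

HB.instance Definition _ :=
  GRing.Zmodule_isLmodule.Build R^c Q scaleqA scaleq1 scaleqDr scaleqDl.
HB.instance Definition _ := GRing.isScalable.Build R^c A Q *:%R \pi_Q pi_scale.

Lemma pi_eq0 x : \pi_Q x = 0 <-> P x.
Proof.
have -> : (0 : Q) = \pi_Q 0 by rewrite raddf0.
apply: (iff_trans (rwP eqP)); rewrite -Quotient.idealrBE subr0.
by split=> /asboolP.
Qed.

Lemma short_exact_submodule :
  exists (S Q : lmodType R^c) (i : {linear S -> A}) (p : {linear A -> Q}),
    short_exact i p /\ forall a, p a = 0 <-> P a.
Proof.
exists submodule_type, Q, val, \pi; split; last exact: pi_eq0.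
split; first exact: val_inj.
split; first by move=> q; exists (repr q); exact: reprK.
move=> a; rewrite pi_eq0; split=> [/asboolP Pa | [s <-]]; first by exists (Sub a Pa).
exact/asboolP/(valP s).
Qed.

End QuotientModule.


Section CompositionSeries.
Variable R : pzRingType.
Implicit Types A S Q : lmodType R^c.

Definition simple_factor A (P Q : A -> Prop) : Prop :=
  (forall x, P x -> Q x) /\ (exists x, Q x /\ ~ P x) /\
  (forall T : A -> Prop, submodule T ->
     (forall x, P x -> T x) -> (forall x, T x -> Q x) ->
     (forall x, T x <-> P x) \/ (forall x, T x <-> Q x)).

Definition composition_series A (n : nat) (P : nat -> A -> Prop) : Prop :=
  (forall k, submodule (P k)) /\ (forall x, P 0%N x <-> x = 0) /\ (forall x, P n x) /\
  (forall k, (k < n)%N -> simple_factor (P k) (P k.+1)).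

Lemma simple_factor_comap S A (i : {linear S -> A}) (P Q : A -> Prop) :
  injective i -> (forall a, Q a -> exists s, i s = a) ->
  simple_factor P Q -> simple_factor (fun s => P (i s)) (fun s => Q (i s)).
Proof.
move=> i_inj imQ [PQ [[b [Qb nPb]] maxPQ]]; split=> [s /PQ //|]; split.
  by have [s ibs] := imQ b Qb; exists s; rewrite ibs.
move=> T submodT PT TQ.
pose iT a := exists s, i s = a /\ T s.
have PiT a : P a -> iT a.
  move=> Pa; have [s ias] := imQ a (PQ a Pa).
  by exists s; split; last by apply: PT; rewrite ias.
have iTQ a : iT a -> Q a by move=> [s [<- /TQ]].
have iT_i s : iT (i s) -> T s by move=> [t [/i_inj <-]].
case: (maxPQ iT (submodule_image i submodT) PiT iTQ) => [iTP | iTQ'].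
- by left=> s; split=> [Ts | /PT //]; apply/iTP; exists s.
- by right=> s; split=> [/TQ // | /iTQ' /iT_i].
Qed.

Lemma simple_factor_quotient A Q (p : {linear A -> Q}) (P P' : A -> Prop) :
  (forall q, exists a, p a = q) -> (forall a, p a = 0 <-> P a) ->
  (forall a, P' a) -> simple_factor P P' -> simple_module Q.
Proof.
move=> p_surj kerP P'T [_ [[b [_ nPb]] maxPP']]; split.
  by exists (p b) => /kerP.
move=> T submodT; have [T0 _] := submodT.
have PTp a : P a -> T (p a) by move=> /kerP ->.
have TpP' a : T (p a) -> P' a by [].
case: (maxPP' _ (submodule_comap p submodT) PTp TpP') => Tp; [left | right] => q;
  have [a <-] := p_surj q.
- by move=> /Tp /kerP.
- exact/Tp.
Qed.

Lemma composition_series_le A n (P : nat -> A -> Prop) k j x :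
  composition_series n P -> (k <= j <= n)%N -> P k x -> P j x.
Proof.
move=> [_ [_ [_ factors]]]; elim: j => [|j IHj].
  by rewrite leqn0 => /andP[/eqP ->].
rewrite leq_eqVlt => /andP[/orP[/eqP -> // | kj] jn] Pk.
by have [PP' _] := factors j jn; apply/PP'/IHj => //; rewrite -ltnS kj ltnW.
Qed.

Lemma composition_series_sub S A n (P : nat -> A -> Prop) (i : {linear S -> A}) :
  composition_series n.+1 P -> injective i -> (forall a, P n a <-> exists s, i s = a) ->
  composition_series n (fun k s => P k (i s)).
Proof.
move=> series i_inj imPn; have [submodP [P0 [_ factors]]] := series.
split=> [k|]; first exact: submodule_comap.
split=> [s|]; first by rewrite P0 -(linear0 i); split=> [/i_inj | ->].
split=> [s|k kn]; first by apply/imPn; exists s.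
apply: simple_factor_comap (factors k (ltnW kn)) => //.
by move=> a /(composition_series_le series) Pka; apply/imPn/Pka; rewrite kn ltnW.
Qed.

End CompositionSeries.

Section Generators.
Variable R : pzRingType.
Implicit Types N S : lmodType R^c.

Definition generated_by N (s : seq N) : Prop :=
  forall y : N, exists c : 'I_(size s) -> R^c, y = \sum_(i < size s) c i *: s`_i.

Lemma generated_by_map N (N' : lmodType R^c) (p : {linear N -> N'}) (s : seq N) :
  (forall q, exists a, p a = q) -> generated_by s -> generated_by (map p s).
Proof.
move=> p_surj gen q; have [a <-] := p_surj q; have [c ->] := gen a.
rewrite size_map; exists c; rewrite linear_sum; apply: eq_bigr => i _.
by rewrite linearZ (nth_map 0).
Qed.

Lemma generated_by_cons0 N (s : seq N) : generated_by (0 :: s) -> generated_by s.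
Proof.
move=> gen y; have [c ->] := gen y; exists (fun i => c (lift ord0 i)).
by rewrite big_ord_recl /= scaler0 add0r.
Qed.

Lemma cyclic_of_embedding S N (i : {linear S -> N}) (x : N) :
  injective i -> (forall a, (exists r, a = r *: x) <-> exists s, i s = a) ->
  cyclic_module S.
Proof.
move=> i_inj imx; have [s0 is0] : exists s, i s = x by apply/imx; exists 1; rewrite scale1r.
exists s0 => s; have [r isr] : exists r, i s = r *: x by apply/imx; exists s.
by exists r; apply: i_inj; rewrite linearZ is0.
Qed.

End Generators.

Section ExtensionClosedClass.
Variables (R : pzRingType) (C : lmodType R^c -> Prop).

Definition extension_closed : Prop :=
  forall (A B Q : lmodType R^c) (i : {linear A -> B}) (p : {linear B -> Q}),
    short_exact i p -> C A -> C Q -> C B.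

Hypothesis C_ext : extension_closed.
Implicit Types A N S : lmodType R^c.

Lemma extension_closed_submodule A (P : A -> Prop) :
  submodule P ->
  (forall S (i : {linear S -> A}),
     injective i -> (forall a, P a <-> exists s, i s = a) -> C S) ->
  (forall (Q : lmodType R^c) (p : {linear A -> Q}),
     (forall q, exists a, p a = q) -> (forall a, p a = 0 <-> P a) -> C Q) ->
  C A.
Proof.
move=> /short_exact_submodule [S [Q [i [p [ses kerP]]]]] C_sub C_quot.
have [i_inj [p_surj exact_ip]] := ses.
apply: C_ext ses (C_sub _ i i_inj _) (C_quot _ p p_surj kerP) => a.
exact: iff_trans (iff_sym (kerP a)) (exact_ip a).
Qed.

Lemma finite_length_closed :
  (forall A, (forall x : A, x = 0) -> C A) ->
  (forall S, simple_module S -> C S) -> forall A, finite_length A -> C A.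
Proof.
move=> C_trivial C_simple A [n [P series]].
elim: n A P series => [|n IHn] A P series.
  by have [_ [P0 [Pn _]]] := series; apply: C_trivial => x; apply/P0/Pn.
have [submodP [_ [Ptop factors]]] := series.
apply: (extension_closed_submodule (submodP n)) => [S i i_inj imi | Q p p_surj kerp].
  exact: IHn (composition_series_sub series i_inj imi).
exact/C_simple/(simple_factor_quotient p_surj kerp Ptop (factors n (ltnSn n))).
Qed.

Lemma finitely_generated_closed :
  (forall N, cyclic_module N -> C N) -> forall N, finitely_generated N -> C N.
Proof.
move=> C_cyclic N [s gen]; move En: (size s) => n.
elim: n N s En gen => [|n IHn] N [|x s] //= => [_ | [size_s]] gen.
  apply: C_cyclic; exists 0 => y; exists 0; have [c ->] := gen y.
  by rewrite big_ord0 scale0r.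
apply: (extension_closed_submodule (submodule_cyclic x))
  => [S i i_inj imi | Q p p_surj kerp].
  exact/C_cyclic/(cyclic_of_embedding i_inj imi).
have px0 : p x = 0 by apply/kerp; exists 1; rewrite scale1r.
apply: (IHn _ (map p s)); first by rewrite size_map.
have gen_ps : generated_by (0 :: map p s).
  by rewrite -px0; exact: (generated_by_map (s := x :: s) p_surj gen).
exact: generated_by_cons0 gen_ps.
Qed.

End ExtensionClosedClass.

Lemma simple_finite_length (R : pzRingType) (S : lmodType R^c) :
  simple_module S -> finite_length S.
Proof.
move=> [[x0 nz_x0] maxS].
exists 1%N, (fun k (x : S) => k = 0%N -> x = 0); split.
  move=> k; split=> //; split=> [x y Px Py k0 | r x Px k0].
    by rewrite (Px k0) (Py k0) addr0.
  by rewrite (Px k0) scaler0.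
split=> [x|]; first by split=> [-> // | -> ].
split=> // k; rewrite ltnS leqn0 => /eqP -> {k}.
split=> //; split; first by exists x0; split=> // /(_ erefl).
move=> T submodT _ _; have [T0 _] := submodT.
case: (maxS T submodT) => T_triv; [left | right] => x.
- by split=> [/T_triv | /(_ erefl) ->].
- by split=> // _; apply: T_triv.
Qed.

Lemma cyclic_finitely_generated (R : pzRingType) (N : lmodType R^c) :
  cyclic_module N -> finitely_generated N.
Proof.
move=> [x genx]; exists [:: x] => y; have [r ->] := genx y.
by exists (fun _ => r); rewrite big_ord1.
Qed.

Lemma PrInv_trivial (R : pzRingType) (M A : lmodType R^c) :
  (forall x : A, x = 0) -> PrInv M A.
Proof. by move=> A0 B g f _; exists \0 => y; rewrite (A0 y) !linear0. Qed.

Theorem mainTheorem6 (R : pzRingType) (M : lmodType R^c) :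
  subprojective_extension_reflecting M ->
  ((forall S : lmodType R^c, simple_module S -> PrInv M S) <->
   (forall A : lmodType R^c, finite_length A -> PrInv M A)) /\
  ((forall N : lmodType R^c, cyclic_module N -> PrInv M N) <->
   (forall N : lmodType R^c, finitely_generated N -> PrInv M N)).
Proof.
move=> M_ser; split; split.
- exact: finite_length_closed M_ser (@PrInv_trivial R M).
- by move=> PrInv_fl S /simple_finite_length /PrInv_fl.
- exact: finitely_generated_closed M_ser.
- by move=> PrInv_fg N /cyclic_finitely_generated /PrInv_fg.
Qed.
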